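(* Let $d\ge2$ and let $L_1,\dots,L_k\subset\mathbb R^d$ be linear subspaces with $\dim L_i\ge2$, $A_i=L_i^\perp$, and assume $L_i\cap L_j\ne\{0\}$ for all $1\le i,j\le k$. Let $\mathcal G_i=\{U\in SO(d): U|_{A_i}=\mathrm{Id}_{A_i}\}$ and let $\mathcal G\subset SO(d)$ be the subgroup generated by $\mathcal G_1,\dots,\mathcal G_k$. Then $\mathcal G$ acts transitively on the unit sphere $\mathbb S^{d-1}$ if and only if $\operatorname{span}\{L_1,\dots,L_k\}=\mathbb R^d$, which in turn is equivalent to $\bigcap_{i=1}^k A_i=\{0\}$. *)

(* R^d is modelled by row vectors 'rV[R]_d over R : realType;
   linear subspaces are row spaces of square matrices (mxalgebra). *)
From HB Require Import structures.
From mathcomp Require Import all_boot all_order all_algebra.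
From mathcomp Require Import reals.
Set Implicit Arguments. Unset Strict Implicit. Unset Printing Implicit Defensive.
Import Order.TTheory GRing.Theory Num.Theory.
Local Open Scope ring_scope.

Section Defs.
Variables (R : realType) (d : nat).

Definition orth_compl (L : 'M[R]_d) : 'M[R]_d := kermx L^T.

Definition SOd (U : 'M[R]_d) : Prop := U *m U^T = 1%:M /\ \det U = 1.

Definition fixes_pointwise (A U : 'M[R]_d) : Prop :=
  forall v : 'rV[R]_d, (v <= A)%MS -> v *m U = v.

Definition rot_fixing (A U : 'M[R]_d) : Prop := SOd U /\ fixes_pointwise A U.

Inductive gen_group (P : 'M[R]_d -> Prop) : 'M[R]_d -> Prop :=
  | gen_one : gen_group P 1%:M
  | gen_base g : P g -> gen_group P g
  | gen_mul g h : gen_group P g -> gen_group P h -> gen_group P (g *m h)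
  | gen_inv g : gen_group P g -> gen_group P (invmx g).

Definition unit_sphere (v : 'rV[R]_d) : Prop := (v *m v^T) 0 0 = 1.

Definition transitive_on_sphere (G : 'M[R]_d -> Prop) : Prop :=
  forall x y : 'rV[R]_d, unit_sphere x -> unit_sphere y ->
    exists U, G U /\ x *m U = y.

End Defs.

From HB Require Import structures.
From mathcomp Require Import all_boot all_order all_algebra.
From mathcomp Require Import reals.
From mathcomp Require Import ring lra zify.
Set Implicit Arguments. Unset Strict Implicit. Unset Printing Implicit Defensive.
Import Order.TTheory GRing.Theory Num.Theory.
Local Open Scope ring_scope.

(* A product of two reflections in nonzero vectors of [L i] lies in [G].  Fix
   a nonzero [c] in some [L i0] and call [v] linked when [refl v * refl c] is
   in [G].  By the intersection hypothesis every vector of every [L i] is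
   linked, and since [refl (b * refl a) = refl a * refl b * refl a] the linked
   vectors are closed under reflections in linked vectors.  A set of vectors
   closed in this way and containing two subspaces that meet nontrivially
   contains their sum: in the span of a common unit vector [e] and of unit
   vectors [f], [g] orthogonal to [e], two reflections carry the planes
   [(e, f)] and [(e, g)] onto any vector as soon as [f] and [g] make an angle
   of at least [pi/4], and reflecting [g] in [f] doubles that angle.  So when
   the [L i] span [R^d] every vector is linked, and a unit [x] is mapped to a
   unit [y] by [refl (y - x) * refl c] with [c] in [L i0] orthogonal to [y].
   Conversely, [G] fixes pointwise the common orthogonal complement of the
   [L i], which is the orthogonal complement of their span. *)

Section Reflections.
Variables (R : realType) (d : nat).
Implicit Types (u v w a b : 'rV[R]_d).

Definition dot u v : R := (u *m v^T) 0 0.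

Lemma dotC u v : dot u v = dot v u.
Proof. by rewrite /dot -[u *m v^T]trmxK trmx_mul trmxK mxE. Qed.

Lemma dotDl u v w : dot (u + v) w = dot u w + dot v w.
Proof. by rewrite /dot mulmxDl mxE. Qed.

Lemma dotNl u w : dot (- u) w = - dot u w.
Proof. by rewrite /dot mulNmx mxE. Qed.

Lemma dotBl u v w : dot (u - v) w = dot u w - dot v w.
Proof. by rewrite dotDl dotNl. Qed.

Lemma dotZl (k : R) u w : dot (k *: u) w = k * dot u w.
Proof. by rewrite /dot -scalemxAl mxE. Qed.

Lemma dotDr u v w : dot w (u + v) = dot w u + dot w v.
Proof. by rewrite dotC dotDl !(dotC w). Qed.

Lemma dotBr u v w : dot w (u - v) = dot w u - dot w v.
Proof. by rewrite dotC dotBl !(dotC w). Qed.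

Lemma dotZr (k : R) u w : dot w (k *: u) = k * dot w u.
Proof. by rewrite dotC dotZl (dotC w). Qed.

Lemma dotvv_sum u : dot u u = \sum_j u 0 j ^+ 2.
Proof. by rewrite /dot mxE; apply: eq_bigr => j _; rewrite mxE expr2. Qed.

Lemma dotvv_ge0 u : 0 <= dot u u.
Proof. by rewrite dotvv_sum sumr_ge0 // => j _; rewrite sqr_ge0. Qed.

Lemma dotvv_eq0 u : (dot u u == 0) = (u == 0).
Proof.
rewrite dotvv_sum psumr_eq0 => [|j _]; last exact: sqr_ge0.
apply/allP/eqP => [u0 | -> j _]; last by rewrite /= mxE expr0n.
apply/rowP => j; apply/eqP; rewrite mxE -sqrf_eq0.
exact: u0 (mem_index_enum j).
Qed.

Lemma dotvv_gt0 u : (0 < dot u u) = (u != 0).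
Proof. by rewrite lt_def dotvv_eq0 dotvv_ge0 andbT. Qed.

Lemma exists_unit_scale u : u != 0 -> exists2 k : R, k != 0 & dot (k *: u) (k *: u) = 1.
Proof.
rewrite -dotvv_gt0 => u_gt0; exists (Num.sqrt (dot u u))^-1.
  by rewrite invr_eq0 gt_eqF ?sqrtr_gt0.
by rewrite dotZl dotZr mulrA -expr2 exprVn sqr_sqrtr ?mulVf ?gt_eqF // ltW.
Qed.

Definition refl a : 'M[R]_d := 1%:M - (2 / dot a a) *: (a^T *m a).

Lemma refl_vec u a : u *m refl a = u - (2 * dot u a / dot a a) *: a.
Proof.
rewrite /refl mulmxBr mulmx1 -scalemxAr mulmxA [u *m a^T]mx11_scalar.
by rewrite mul_scalar_mx scalerA mulrAC.
Qed.

(* [2 / 0 = 0], so the reflection in the zero vector is the identity. *)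
Lemma refl0 : refl 0 = 1%:M.
Proof. by rewrite /refl mulmx0 scaler0 subr0. Qed.

Lemma refl_fix u a : dot u a = 0 -> u *m refl a = u.
Proof. by move=> ua; rewrite refl_vec ua mulr0 mul0r scale0r subr0. Qed.

Lemma refl_tr a : (refl a)^T = refl a.
Proof. by rewrite /refl linearB /= trmx1 linearZ /= trmx_mul trmxK. Qed.

Lemma refl_invol a : refl a *m refl a = 1%:M.
Proof.
have [->|a0] := eqVneq a 0; first by rewrite refl0 mulmx1.
have aa : dot a a != 0 by rewrite dotvv_eq0.
apply/eqP/mulmxP => u; rewrite mulmx1 mulmxA !refl_vec dotBl dotZl.
by apply/rowP => j; rewrite !mxE; field.
Qed.

Lemma refl_orthogonal a : refl a *m (refl a)^T = 1%:M.
Proof. by rewrite refl_tr refl_invol. Qed.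

Lemma det1B_rank1 (u : 'cV[R]_d) (b : 'rV[R]_d) :
  \det (1%:M - u *m b) = 1 - (b *m u) 0 0.
Proof.
pose M := block_mx (1%:M : 'M[R]_1) b u 1%:M.
have -> : \det (1%:M - u *m b) = \det M.
  have -> : M = block_mx 1%:M 0 u 1%:M *m block_mx 1%:M b 0 (1%:M - u *m b).
    by rewrite mulmx_block !mul1mx !mulmx1 !mul0mx !addr0 addrC subrK.
  by rewrite det_mulmx det_lblock det_ublock !det1 !mul1r.
have -> : M = block_mx (1%:M - b *m u) b 0 1%:M *m block_mx 1%:M 0 u 1%:M.
  by rewrite mulmx_block !mul1mx !mulmx1 !mul0mx ?mulmx0 ?addr0 ?add0r subrK.
by rewrite det_mulmx det_lblock det_ublock !det1 !mulr1 det_mx11 !mxE mulr1n.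
Qed.

Lemma det_refl a : a != 0 -> \det (refl a) = -1.
Proof.
rewrite -dotvv_eq0 => aa; rewrite /refl scalemxAl det1B_rank1 -scalemxAr mxE.
by rewrite -/(dot a a) mulfVK //; lra.
Qed.

Lemma dot_refl a u v : dot (u *m refl a) (v *m refl a) = dot u v.
Proof. by rewrite /dot trmx_mul refl_tr mulmxA -(mulmxA u) refl_invol mulmx1. Qed.

Lemma refl_orth_conj (U : 'M[R]_d) b : U *m U^T = 1%:M ->
  refl (b *m U) = U^T *m refl b *m U.
Proof.
move=> UU; have bUbU : dot (b *m U) (b *m U) = dot b b.
  by rewrite /dot trmx_mul mulmxA -(mulmxA b) UU mulmx1.
rewrite /refl bUbU mulmxBr mulmx1 mulmxBl (mulmx1C UU) -scalemxAr -scalemxAl.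
by rewrite trmx_mul !mulmxA.
Qed.

Lemma refl_conj a b : refl (b *m refl a) = refl a *m refl b *m refl a.
Proof. by rewrite refl_orth_conj ?refl_orthogonal // refl_tr. Qed.

Lemma refl_between u w : dot u u = dot w w -> w *m refl (u - w) = u.
Proof.
move=> uw; have [->|] := eqVneq u w; first by rewrite subrr refl0 mulmx1.
rewrite -subr_eq0 -dotvv_eq0 => nz.
have E : dot (u - w) (u - w) = - (2 * dot w (u - w)).
  by rewrite !(dotBl, dotBr) (dotC w u) uw; ring.
rewrite refl_vec E divrN divff; last by rewrite -oppr_eq0 -E.
by rewrite scaleN1r opprK addrC subrK.
Qed.

End Reflections.

Section ReflectionClosed.
Variables (R : realType) (d : nat) (E : 'rV[R]_d -> Prop).
Hypothesis E_refl : forall a b, E a -> E b -> E (b *m refl a).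

Lemma E_reach u w : E w -> dot u u = dot w w -> E (u - w) -> E u.
Proof. by move=> Ew uw Euw; rewrite -(refl_between uw); apply: E_refl. Qed.

Section Frame.
Variable e : 'rV[R]_d.
Hypothesis ee : dot e e = 1.

Definition plane_in f := forall x y : R, E (x *: e + y *: f).

Section Pair.
Variables f g : 'rV[R]_d.
Hypotheses (ff : dot f f = 1) (gg : dot g g = 1) (ef : dot e f = 0) (eg : dot e g = 0).

Lemma dot_comb3 x y z :
  dot (x *: e + y *: f + z *: g) (x *: e + y *: f + z *: g) =
  x ^+ 2 + y ^+ 2 + z ^+ 2 + 2 * y * z * dot f g.
Proof.
rewrite !(dotDl, dotDr, dotZl, dotZr) ee ff gg (dotC f e) (dotC g e) ef eg.
by rewrite (dotC g f); ring.
Qed.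

(* Two reflection steps, from [w2] in the plane [(e, f)] to [w1] and then to
   the target, each difference lying in one of the two planes; [w2] can be
   given the right norm because [2 c^2 <= 1]. *)
Lemma span3_in_wide_angle : 2 * dot f g ^+ 2 <= 1 -> plane_in f -> plane_in g ->
  forall x y z, E (x *: e + y *: f + z *: g).
Proof.
set c := dot f g => c2 Ef Eg x y z.
pose x1 := Num.sqrt (x ^+ 2 + (y + z * c) ^+ 2).
pose x2 := Num.sqrt (x1 ^+ 2 + z ^+ 2 * (1 - 2 * c ^+ 2)).
have x1E : x1 ^+ 2 = x ^+ 2 + (y + z * c) ^+ 2.
  by rewrite sqr_sqrtr // addr_ge0 ?sqr_ge0.
have x2E : x2 ^+ 2 = x1 ^+ 2 + z ^+ 2 * (1 - 2 * c ^+ 2).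
  by rewrite sqr_sqrtr // addr_ge0 ?sqr_ge0 // mulr_ge0 ?sqr_ge0 // subr_ge0.
pose w2 := x2 *: e + (- (z * c)) *: f + 0 *: g.
pose w1 := x1 *: e + (- (z * c)) *: f + z *: g.
have Ew2 : E w2 by rewrite /w2 scale0r addr0; apply: Ef.
have Ew1 : E w1.
  apply: (E_reach Ew2); first by rewrite !dot_comb3 x2E -/c; ring.
  have -> : w1 - w2 = (x1 - x2) *: e + z *: g.
    by apply/rowP => j; rewrite !mxE; ring.
  exact: Eg.
apply: (E_reach Ew1); first by rewrite !dot_comb3 x1E -/c; ring.
have -> : x *: e + y *: f + z *: g - w1 = (x - x1) *: e + (y + z * c) *: f.
  by apply/rowP => j; rewrite !mxE; ring.
exact: Ef.
Qed.

End Pair.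

Lemma plane_in_refl f g : dot e f = 0 -> plane_in f -> plane_in g ->
  plane_in (g *m refl f).
Proof.
move=> ef Ef Eg x y; have Eff : E f by have := Ef 0 1; rewrite scale0r add0r scale1r.
have -> : x *: e + y *: (g *m refl f) = (x *: e + y *: g) *m refl f.
  by rewrite mulmxDl -!scalemxAl (refl_fix ef).
exact: E_refl.
Qed.

(* Reflecting [g] in [f] doubles the angle between [f] and [g]: with
   [c = dot f g], [1 - c^2] becomes [4 c^2 (1 - c^2)], at least twice as
   large while [2 c^2 > 1]. *)
Lemma span3_in_iter n f g : dot f f = 1 -> dot g g = 1 -> dot e f = 0 -> dot e g = 0 ->
  1 <= (1 - dot f g ^+ 2) * 2 ^+ n.+1 -> plane_in f -> plane_in g ->
  forall x y z, E (x *: e + y *: f + z *: g).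
Proof.
elim: n f g => [|n IH] f g ff gg ef eg hn Ef Eg.
  have c2 : 2 * dot f g ^+ 2 <= 1 by move: hn; rewrite expr1; lra.
  exact: span3_in_wide_angle.
set c := dot f g in hn *.
have [c2|c2] := lerP (2 * c ^+ 2) 1; first exact: span3_in_wide_angle.
have c0 : c != 0 by apply/eqP => c0; rewrite c0 expr0n mulr0 in c2; lra.
pose g' := g *m refl f.
have g'E : g' = g - (2 * c) *: f by rewrite /g' refl_vec ff divr1 dotC.
have g'g' : dot g' g' = 1 by rewrite dot_refl.
have eg' : dot e g' = 0 by rewrite g'E dotBr dotZr ef eg mulr0 subr0.
have gg' : dot g g' = 1 - 2 * c ^+ 2 by rewrite g'E dotBr dotZr gg (dotC g f) -/c; ring.
move=> x y z.
have -> : x *: e + y *: f + z *: g =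
    x *: e + (z + y / (2 * c)) *: g + (- (y / (2 * c))) *: g'.
  by rewrite g'E; apply/rowP => j; rewrite !mxE; field.
apply: IH => //; last exact: plane_in_refl.
rewrite gg' -/c; rewrite (exprS 2 n.+1) in hn.
have : 0 <= (2 * c ^+ 2 - 1) * ((1 - c ^+ 2) * 2 ^+ n.+1).
  by rewrite mulr_ge0 //; lra.
nra.
Qed.

Lemma exists_pow2_ge (s : R) : 0 < s -> exists n, 1 <= s * 2 ^+ n.+1.
Proof.
move=> s0; pose N := Num.Def.archi_bound s^-1.
have hN : s^-1 < N%:R by apply: archi_boundP; rewrite invr_ge0 ltW.
exists N; have : (N%:R : R) <= 2 ^+ N.+1.
  by rewrite -natrX ler_nat; apply/ltnW/ltnW/ltn_expl.
rewrite -(ltr_pM2l s0) mulfV ?gt_eqF // in hN.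
by move=> h; rewrite (le_trans (ltW hN)) // ler_pM2l.
Qed.

Lemma span3_in f g : dot f f = 1 -> dot g g = 1 -> dot e f = 0 -> dot e g = 0 ->
  plane_in f -> plane_in g -> forall x y z, E (x *: e + y *: f + z *: g).
Proof.
move=> ff gg ef eg Ef Eg x y z; set c := dot f g.
have gcf : dot (g - c *: f) (g - c *: f) = 1 - c ^+ 2.
  by rewrite !(dotBl, dotBr, dotZl, dotZr) ff gg (dotC g f) -/c; ring.
have [c1|c1] := eqVneq (c ^+ 2) 1.
  have -> : g = c *: f by apply/eqP; rewrite -subr_eq0 -dotvv_eq0 gcf c1 subrr.
  by rewrite scalerA -addrA -scalerDl; apply: Ef.
have [n hn] : exists n, 1 <= (1 - c ^+ 2) * 2 ^+ n.+1.
  apply: exists_pow2_ge; rewrite lt_neqAle eq_sym subr_eq0 eq_sym c1 -gcf.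
  exact: dotvv_ge0.
exact: (span3_in_iter ff gg ef eg hn Ef Eg).
Qed.

End Frame.

Definition subspace_in m (X : 'M[R]_(m, d)) := forall v : 'rV_d, (v <= X)%MS -> E v.

Lemma subspace_in_sub m1 m2 (X : 'M_(m1, d)) (Y : 'M_(m2, d)) :
  (Y <= X)%MS -> subspace_in X -> subspace_in Y.
Proof. by move=> YX EX v vY; apply: EX; apply: submx_trans YX. Qed.

Lemma subspace_in_adds m1 m2 (X : 'M_(m1, d)) (Y : 'M_(m2, d)) (e : 'rV_d) :
  e != 0 -> (e <= X)%MS -> (e <= Y)%MS -> subspace_in X -> subspace_in Y ->
  subspace_in (X + Y)%MS.
Proof.
move=> e0 eX eY EX EY _ /sub_addsmxP[[p q] /= ->].
set x := p *m X; set y := q *m Y.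
have [xX yY] : (x <= X)%MS /\ (y <= Y)%MS by rewrite !submxMl.
have [e1 [e1e1 e1X e1Y]] :
    exists e1 : 'rV_d, [/\ dot e1 e1 = 1, (e1 <= X)%MS & (e1 <= Y)%MS].
  by have [k _ kk] := exists_unit_scale e0; exists (k *: e); rewrite !scalemx_sub.
pose x' := x - dot x e1 *: e1; pose y' := y - dot y e1 *: e1.
have x'X : (x' <= X)%MS by rewrite addmx_sub ?eqmx_opp ?scalemx_sub.
have y'Y : (y' <= Y)%MS by rewrite addmx_sub ?eqmx_opp ?scalemx_sub.
have [e1x' e1y'] : dot e1 x' = 0 /\ dot e1 y' = 0.
  by rewrite /x' /y' !dotBr !dotZr e1e1 !mulr1 !(dotC e1) !subrr.
have [x'0|x'0] := eqVneq x' 0.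
  apply: EY; rewrite addmx_sub // (_ : x = dot x e1 *: e1) ?scalemx_sub //.
  by apply/eqP; rewrite -subr_eq0 -/x' x'0.
have [y'0|y'0] := eqVneq y' 0.
  apply: EX; rewrite addmx_sub // (_ : y = dot y e1 *: e1) ?scalemx_sub //.
  by apply/eqP; rewrite -subr_eq0 -/y' y'0.
have [kx kx0 xx] := exists_unit_scale x'0; have [ky ky0 yy] := exists_unit_scale y'0.
have Exy := span3_in e1e1 xx yy _ _ _ _ (dot x e1 + dot y e1) kx^-1 ky^-1.
rewrite !scalerA !mulVf // !scale1r in Exy.
have -> : x + y = (dot x e1 + dot y e1) *: e1 + x' + y'.
  by apply/rowP => j; rewrite !mxE; ring.
apply: Exy; rewrite ?dotZr ?e1x' ?e1y' ?mulr0 // => a b.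
  by apply: EX; rewrite addmx_sub ?scalemx_sub.
by apply: EY; rewrite addmx_sub ?scalemx_sub.
Qed.

Lemma subspace_in_sumsmx (I : finType) (L : I -> 'M[R]_d) i0 :
  (forall i, subspace_in (L i)) -> (forall i, (L i :&: L i0)%MS != 0) ->
  subspace_in (\sum_i L i)%MS.
Proof.
move=> EL capL; apply: (subspace_in_sub (addsmxSr (L i0) _)).
elim/big_rec: _ => [|i X _ EX]; first by rewrite addsmx0_id.
rewrite addsmxA (addsmxC (L i0)) -addsmxA.
have /rowV0Pn[e] := capL i; rewrite sub_capmx => /andP[ei ei0] e0.
apply: subspace_in_adds e0 ei _ (EL i) EX.
exact: submx_trans ei0 (addsmxSl _ _).
Qed.

End ReflectionClosed.

Lemma gen_group_fixed (R : realType) d (P : 'M[R]_d -> Prop) (x : 'rV[R]_d) :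
  (forall U, P U -> x *m U = x) -> forall U, gen_group P U -> x *m U = x.
Proof.
move=> Px U; elim=> [|g /Px //|g h _ xg _ xh|g _ xg]; first by rewrite mulmx1.
  by rewrite mulmxA xg xh.
have [g_unit|g_out] := boolP (g \in unitmx); first by rewrite -{1}xg mulmxK.
by rewrite invmx_out.
Qed.

Section OrthogonalComplement.
Variables (R : realType) (d : nat).

Lemma sub_orth_compl m (M : 'M[R]_(m, d)) (L : 'M_d) :
  (M <= orth_compl L)%MS = (L <= kermx M^T)%MS.
Proof.
by rewrite /orth_compl !sub_kermx -(inj_eq (@trmx_inj _ _ _)) trmx_mul trmxK trmx0.
Qed.

Lemma dot_orth_compl (L : 'M[R]_d) v a :
  (v <= orth_compl L)%MS -> (a <= L)%MS -> dot v a = 0.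
Proof.
rewrite /orth_compl sub_kermx => /eqP vL /submxP[w ->].
by rewrite /dot trmx_mul mulmxA vL mul0mx mxE.
Qed.

Lemma orth_compl_eq0 (L : 'M[R]_d) : (orth_compl L == 0) = row_full L.
Proof. by rewrite /orth_compl kermx_eq0 /row_free mxrank_tr. Qed.

Lemma sub_orth_compl_sum k (L : 'I_k -> 'M[R]_d) m (M : 'M_(m, d)) :
  (M <= orth_compl (\sum_(i < k) L i)%MS)%MS =
  (M <= \bigcap_(i < k) orth_compl (L i))%MS.
Proof.
rewrite sub_orth_compl; apply/sumsmx_subP/sub_bigcapmxP => ML i _.
  by rewrite sub_orth_compl ML.
by rewrite -sub_orth_compl ML.
Qed.

Lemma bigcap_orth_compl k (L : 'I_k -> 'M[R]_d) :
  (\bigcap_(i < k) orth_compl (L i) :=: orth_compl (\sum_(i < k) L i)%MS)%MS.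
Proof.
by apply/eqmxP; rewrite sub_orth_compl_sum submx_refl /= -sub_orth_compl_sum.
Qed.

Lemma eqmx1_row_full m (A : 'M[R]_(m, d)) : (A :=: 1%:M)%MS <-> row_full A.
Proof.
split=> [eqA | fullA]; first by rewrite -sub1mx eqA.
by apply/eqmxP; rewrite submx1 sub1mx.
Qed.

Lemma exists_orth_in (L : 'M[R]_d) y : (2 <= \rank L)%N ->
  exists c, [/\ c != 0, (c <= L)%MS & dot y c = 0].
Proof.
move=> rkL; have : (L :&: kermx y^T)%MS != 0.
  rewrite -mxrank_eq0 -lt0n; have := mxrank_sum_cap L (kermx y^T).
  rewrite mxrank_ker mxrank_tr; have := rank_leq_row y.
  have := rank_leq_col (L + kermx y^T)%MS; lia.
case/rowV0Pn=> c; rewrite sub_capmx sub_kermx => /andP[cL /eqP cy] c0.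
by exists c; split=> //; rewrite dotC /dot cy mxE.
Qed.

Lemma rot_fixing_refl_pair (L : 'M[R]_d) a b : a != 0 -> b != 0 ->
  (a <= L)%MS -> (b <= L)%MS -> rot_fixing (orth_compl L) (refl a *m refl b).
Proof.
move=> a0 b0 aL bL; split; first split.
- by rewrite trmx_mul !refl_tr mulmxA -(mulmxA (refl a)) refl_invol mulmx1 refl_invol.
- by rewrite det_mulmx !det_refl // mulrNN mulr1.
by move=> v vL; rewrite mulmxA !refl_fix // (dot_orth_compl vL).
Qed.

End OrthogonalComplement.

Definition rot_group (R : realType) d k (L : 'I_k -> 'M[R]_d) :=
  gen_group (fun U => exists i : 'I_k, rot_fixing (orth_compl (L i)) U).

Section RotationGroup.
Variables (R : realType) (d k : nat) (L : 'I_k -> 'M[R]_d).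
Local Notation G := (rot_group L).

Lemma rot_group_refl_pair i a b : a != 0 -> b != 0 ->
  (a <= L i)%MS -> (b <= L i)%MS -> G (refl a *m refl b).
Proof.
by move=> a0 b0 aL bL; apply: gen_base; exists i; apply: rot_fixing_refl_pair.
Qed.

Lemma rot_group_refl_swap a b : G (refl a *m refl b) -> G (refl b *m refl a).
Proof.
have ab : refl a *m refl b *m (refl b *m refl a) = 1%:M.
  by rewrite mulmxA -(mulmxA (refl a)) refl_invol mulmx1 refl_invol.
have [ab_unit _] := mulmx1_unit ab.
have -> : refl b *m refl a = invmx (refl a *m refl b).
  by rewrite -[LHS]mul1mx -(mulVmx ab_unit) -mulmxA ab mulmx1.
exact: gen_inv.
Qed.

Variable c : 'rV[R]_d.

(* [0] is declared linked because [subspace_in] quantifies over all the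
   vectors of a subspace. *)
Definition linked v := v = 0 \/ G (refl v *m refl c).

Lemma linked_refl a b : linked a -> linked b -> linked (b *m refl a).
Proof.
move=> [->|Ga]; first by rewrite refl0 mulmx1.
move=> [->|Gb]; [by left; rewrite mul0mx | right].
have -> : refl (b *m refl a) *m refl c =
    refl a *m refl c *m (refl c *m refl b) *m (refl a *m refl c).
  by rewrite refl_conj !mulmxA -(mulmxA (refl a) (refl c)) refl_invol mulmx1.
by apply: gen_mul => //; apply: gen_mul => //; apply: rot_group_refl_swap.
Qed.

Lemma linked_subspace i0 j : c != 0 -> (c <= L i0)%MS ->
  (L j :&: L i0)%MS != 0 -> subspace_in linked (L j).
Proof.
move=> c0 cL /rowV0Pn[e]; rewrite sub_capmx => /andP[ej ei0] e0 v vL.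
have [->|v0] := eqVneq v 0; [by left | right].
have -> : refl v *m refl c = refl v *m refl e *m (refl e *m refl c).
  by rewrite mulmxA -(mulmxA (refl v)) refl_invol mulmx1.
apply: gen_mul; first exact: rot_group_refl_pair v0 e0 vL ej.
exact: rot_group_refl_pair e0 c0 ei0 cL.
Qed.

Lemma linked_row_full i0 : c != 0 -> (c <= L i0)%MS ->
  (forall i j, (0 < \rank (L i :&: L j))%N) -> row_full (\sum_(i < k) L i)%MS ->
  forall v, linked v.
Proof.
move=> c0 cL capL full v.
have cap0 i : (L i :&: L i0)%MS != 0 by rewrite -mxrank_eq0 -lt0n.
apply: (subspace_in_sumsmx linked_refl _ cap0).
  by move=> j; exact: linked_subspace c0 cL (cap0 j).
by rewrite -sub1mx in full; apply: submx_trans (submx1 v) full.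
Qed.

End RotationGroup.

Lemma transitive_of_row_full (R : realType) d k (L : 'I_k -> 'M[R]_d) :
  (0 < d)%N -> (forall i, (2 <= \rank (L i))%N) ->
  (forall i j, (0 < \rank (L i :&: L j))%N) -> row_full (\sum_(i < k) L i)%MS ->
  transitive_on_sphere (rot_group L).
Proof.
move=> d0 rkL capL full x y xx yy.
have [->|xy] := eqVneq x y.
  by exists 1%:M; split; [exact: gen_one | rewrite mulmx1].
have [k0|k0] := posnP k.
  move: full; rewrite big1 => [|i _]; last by have := ltn_ord i; lia.
  by rewrite /row_full mxrank0 eq_sym gtn_eqF.
have [c [c0 cL yc]] := exists_orth_in y (rkL (Ordinal k0)).
have [/eqP|Gyx] := linked_row_full c0 cL capL full (y - x).
  by rewrite subr_eq0 eq_sym (negbTE xy).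
exists (refl (y - x) *m refl c); split=> //.
rewrite mulmxA refl_between ?refl_fix //.
by move: xx yy; rewrite /unit_sphere -!/(dot _ _) => -> ->.
Qed.

Lemma row_full_of_transitive (R : realType) d k (L : 'I_k -> 'M[R]_d) :
  transitive_on_sphere (rot_group L) -> row_full (\sum_(i < k) L i)%MS.
Proof.
move=> trG; apply: contraT; rewrite -orth_compl_eq0 => /rowV0Pn[v].
rewrite sub_orth_compl_sum => /sub_bigcapmxP vL v0.
have [s _ xx] := exists_unit_scale v0; set x := s *: v in xx.
have xNx : unit_sphere (- x) by rewrite /unit_sphere -/(dot _ _) dotNl dotC dotNl opprK.
have [U [GU xU]] := trG x (- x) xx xNx.
have fixG V : (exists i, rot_fixing (orth_compl (L i)) V) -> x *m V = x.
  by case=> i [_ fixV]; apply/fixV/scalemx_sub/vL.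
rewrite (gen_group_fixed fixG GU) in xU.
by move: (congr1 (dot x) xU); rewrite dotC dotNl xx; lra.
Qed.

Theorem proposition1p5 (R : realType) (d k : nat) (L : 'I_k -> 'M[R]_d) :
  (2 <= d)%N ->
  (forall i, (2 <= \rank (L i))%N) ->
  (forall i j, (0 < \rank (L i :&: L j)%MS)%N) ->
  let G := gen_group (fun U => exists i : 'I_k, rot_fixing (orth_compl (L i)) U) in
  (transitive_on_sphere G <-> (\sum_(i < k) L i :=: (1%:M : 'M[R]_d))%MS) /\
  ((\sum_(i < k) L i :=: (1%:M : 'M[R]_d))%MS <-> (\bigcap_(i < k) orth_compl (L i) == (0 : 'M[R]_d))%MS).
Proof.
move=> d2 rkL capL G; split.
  split=> [/row_full_of_transitive/eqmx1_row_full // | /eqmx1_row_full].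
  exact: transitive_of_row_full (ltnW d2) rkL capL.
apply: (iff_trans (eqmx1_row_full _)).
rewrite -orth_compl_eq0 -(eqmx_eq0 (bigcap_orth_compl L)) sub0mx andbT submx0.
exact: iff_refl.
Qed.
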